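(* Let $(X,S_b)$ be an $S_b$-metric space with $b\geq 1$, let $x_1,x_2\in X$, and let $f:X\to X$ be a self-mapping for which there exist $\alpha\in(0,1)$ and a non-decreasing function $\varphi:(0,\infty)\to(1,\infty)$ such that for all $x\in X\setminus\{x_1,x_2\}$, $$S_b(x,x,fx)>0 \implies \varphi\big(S_b(x,x,fx)\big)\leq \left[\varphi\left(\frac{S_b(x,x,x_1)}{S_b(x,x,x_2)}\right)\right]^{\alpha}$$ (i.e. $f$ is a Jleli-Samet type $A_{x_1,x_2}$-$S_b$-contraction). Let $$r=\inf\{S_b(x,x,fx): x\neq fx,\ x\in X\}.$$ If $fx_1=x_1$ and $fx_2=x_2$, then $f$ fixes the Apollonius circle $A^{S_b}_r(x_1,x_2)=\left\{x\in X\setminus\{x_2\}: \frac{S_b(x,x,x_1)}{S_b(x,x,x_2)}=r\right\}$, i.e. $fx=x$ for every $x\in A^{S_b}_r(x_1,x_2)$.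
   Context: An $S_b$-metric space $(X,S_b)$ with constant $b\geq 1$ is a nonempty set $X$ with a function $S_b:X\times X\times X\to[0,\infty)$ such that for all $x,y,z,a\in X$: (1) $S_b(x,y,z)=0$ if and only if $x=y=z$; (2) $S_b(x,y,z)\leq b[S_b(x,x,a)+S_b(y,y,a)+S_b(z,z,a)]$. A mapping $f$ fixes a set $\mathcal{F}\subseteq X$ if $\mathcal{F}$ is contained in the fixed point set $\{x\in X: fx=x\}$. *)

From Stdlib Require Import Reals.
Open Scope R_scope.

Definition Sb_metric {X : Type} (S : X -> X -> X -> R) (b : R) : Prop :=
  1 <= b /\
  (forall x y z, 0 <= S x y z) /\
  (forall x y z, S x y z = 0 <-> (x = y /\ y = z)) /\
  (forall x y z a, S x y z <= b * (S x x a + S y y a + S z z a)).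

Definition is_glb (E : R -> Prop) (r : R) : Prop :=
  (forall t, E t -> r <= t) /\ (forall m, (forall t, E t -> m <= t) -> m <= r).

Definition fixes_set {X : Type} (f : X -> X) (F : X -> Prop) : Prop :=
  forall x, F x -> f x = x.

Definition apollonius_circle {X : Type} (S : X -> X -> X -> R) (r : R) (x1 x2 : X)
  : X -> Prop :=
  fun x => x <> x2 /\ S x x x1 / S x x x2 = r.

Definition JS_contraction {X : Type} (S : X -> X -> X -> R) (f : X -> X) (x1 x2 : X)
  (alpha : R) (phi : R -> R) : Prop :=
  forall x, x <> x1 -> x <> x2 -> 0 < S x x (f x) ->
    phi (S x x (f x)) <= Rpower (phi (S x x x1 / S x x x2)) alpha.

(* A point x of the circle that is not fixed satisfies x <> x1 (as x1 is fixed), so the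
   contraction applies at x.  Its displacement S(x,x,fx) is at least the infimum r, and r is
   the ratio S(x,x,x1)/S(x,x,x2); monotonicity of phi then gives
   phi r <= phi (S(x,x,fx)) <= (phi r)^alpha < phi r, since phi r > 1 and alpha < 1. *)
From Stdlib Require Import Reals Lra Classical.
Open Scope R_scope.

Lemma Sb_metric_pos {X : Type} (S : X -> X -> X -> R) (b : R) (y z : X) :
  Sb_metric S b -> y <> z -> 0 < S y y z.
Proof.
  intros [_ [hnn [hzero _]]] hyz.
  destruct (Rle_lt_or_eq_dec _ _ (hnn y y z)) as [hlt | heq]; [exact hlt |].
  exfalso; apply hyz.
  symmetry in heq; apply hzero in heq; tauto.
Qed.

Lemma Rpower_lt_self (a alpha : R) : 1 < a -> alpha < 1 -> Rpower a alpha < a.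
Proof.
  intros ha halpha.
  rewrite <- (Rpower_1 a) at 2 by lra.
  now apply Rpower_lt.
Qed.

Lemma phi_not_contracted (phi : R -> R) (alpha s t : R) :
  alpha < 1 ->
  (forall u, 0 < u -> 1 < phi u) ->
  (forall u v, 0 < u -> u <= v -> phi u <= phi v) ->
  0 < t -> t <= s -> ~ phi s <= Rpower (phi t) alpha.
Proof.
  intros halpha hrange hmono ht hts hcontr.
  assert (hlt := Rpower_lt_self (phi t) alpha (hrange t ht) halpha).
  assert (hle := hmono t s ht hts).
  lra.
Qed.

Theorem theorem2p17 (X : Type) (S : X -> X -> X -> R) (b : R)
  (hS : Sb_metric S b) (x1 x2 : X) (f : X -> X)
  (alpha : R) (phi : R -> R)
  (halpha : 0 < alpha < 1)
  (hphi_range : forall t, 0 < t -> 1 < phi t)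
  (hphi_mono : forall s t, 0 < s -> s <= t -> phi s <= phi t)
  (hcontr : JS_contraction S f x1 x2 alpha phi)
  (r : R) (hr : is_glb (fun t => exists x, x <> f x /\ t = S x x (f x)) r)
  (hfx1 : f x1 = x1) (hfx2 : f x2 = x2) :
  fixes_set f (apollonius_circle S r x1 x2).
Proof.
  intros x [hx2 hratio].
  destruct (classic (f x = x)) as [hfix | hmoved]; [exact hfix | exfalso].
  assert (hx1 : x <> x1) by (intros ->; congruence).
  assert (hdisp : 0 < S x x (f x))
    by (apply (Sb_metric_pos S b); auto).
  assert (hr_pos : 0 < r).
  { rewrite <- hratio.
    apply Rdiv_lt_0_compat; apply (Sb_metric_pos S b); auto. }
  assert (hr_le : r <= S x x (f x)) by (apply (proj1 hr); eauto).
  apply (phi_not_contracted phi alpha (S x x (f x)) r (proj2 halpha)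
           hphi_range hphi_mono hr_pos hr_le).
  rewrite <- hratio.
  exact (hcontr x hx1 hx2 hdisp).
Qed.
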